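(* Fix $e\in\mathbb Z_{>0}$ and let $\mathsf Y_e(t)=\sum_{k\geqslant 0}y^{k+1}_{k+2+e}t^k\in\mathbb Z[[t]]$. Then \[ \mathsf Y_e(t)=\frac{\mathsf y_e(t)}{(1-t)^{2e+1}},\qquad \mathsf y_e(t)=\sum_{h=0}^{2e-1}\gamma^{(e)}_h t^h\in\mathbb Z[t], \] where for $0\leqslant h\leqslant 2e-1$ \[ \gamma^{(e)}_h=\sum_{j=0}^{h}(-1)^{h+j}\binom{2e+1}{h-j}y^{j+1}_{j+e+2}. \] In particular $\mathsf Y_e(t)$ is a rational function and $\mathsf y_e$ has degree at most $2e-1$.
   Context: Let $\mathbb N=\mathbb Z_{\geqslant 0}$ with the componentwise partial order on $\mathbb N^n$. For integers $n,d\geqslant 0$, an $(n-1)$-dimensional partition of size $d$ is a subset $\lambda\subset\mathbb N^n$ with $|\lambda|=d$ such that $\mathbf a\in\lambda$ and $\mathbf y\leqslant\mathbf a$ imply $\mathbf y\in\lambda$; $\mathrm P^n_d$ is the set of these. The embedding dimension $h_\lambda(1)$ is the number of elements of $\lambda$ whose coordinates sum to $1$. Define $y^k_d=|\{\lambda\in\mathrm P^k_d: h_\lambda(1)=k\}|$. *)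

From mathcomp Require Import all_boot all_algebra.
Set Implicit Arguments. Unset Strict Implicit. Unset Printing Implicit Defensive.
Import GRing.Theory.

(* (n-1)-dimensional partitions of size d: finite downward-closed subsets of
   N^n with d elements.  Every element a of such a set satisfies a_i < d
   (the box [0,a] lies in the set and has >= a_i+1 elements), so we encode
   points of N^n as functions 'I_n -> 'I_d (coordinates read as nats). *)
Definition pt_le (n d : nat) (y a : {ffun 'I_n -> 'I_d}) : bool :=
  [forall i, (y i <= a i)%N].

Definition is_partition (n d : nat) (lam : {set {ffun 'I_n -> 'I_d}}) : bool :=
  (#|lam| == d) &&
  [forall a in lam, forall y, pt_le y a ==> (y \in lam)].

Definition emb_dim (n d : nat) (lam : {set {ffun 'I_n -> 'I_d}}) : nat :=
  #|[set a in lam | (\sum_(i < n) (a i : nat) == 1)%N]|.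

Definition ycount (k d : nat) : nat :=
  #|[set lam : {set {ffun 'I_k -> 'I_d}} |
      is_partition lam && (emb_dim lam == k)]|.

Definition Ycoef (e k : nat) : int := (ycount k.+1 (k + 2 + e))%:Z.

Local Open Scope ring_scope.

Definition gamma (e h : nat) : int :=
  \sum_(j < h.+1) (-1) ^+ (h + j) * ('C(2 * e + 1, h - j))%:R
                   * (ycount j.+1 (j + e + 2))%:R.

Definition ye (e : nat) : {poly int} := \poly_(h < 2 * e) gamma e h.

(* A partition of size K+e+1 in N^K with embedding dimension K consists of 0, the K
   unit vectors and exactly e high points, of degree >= 2.  Its support, the set of
   coordinates used by high points, is nonempty and has at most 2e elements: below
   every high point using coordinate i lies a point of degree 2 using i, and each of
   the at most e points of degree 2 uses at most two coordinates.  Extending by zero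
   along the inclusion of the support is a bijection from the partitions in N^m with
   full support, so y^K_{K+e+1} = sum_{m=1}^{2e} C(K,m) g_m for counts g_m independent
   of K: a polynomial of degree <= 2e in K vanishing at K = 0.  For N >= 2e the N-th
   coefficient of (1-t)^{2e+1} Y_e(t) is a (2e+1)-st finite difference of it, hence
   0; for N < 2e it is gamma_N by definition. *)

From mathcomp Require Import all_boot all_algebra.
From mathcomp Require Import zify ring.
Set Implicit Arguments. Unset Strict Implicit. Unset Printing Implicit Defensive.

Section Points.
Variables n d : nat.
Local Notation pt := {ffun 'I_n -> 'I_d.+1}.

Definition deg (a : pt) : nat := \sum_(i < n) (a i : nat).
Definition pt0 : pt := [ffun => ord0].
Definition unit_pt (i : 'I_n) : pt := [ffun t => if t == i then inord 1 else ord0].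
Definition pt_min (a : pt) (v : 'I_n -> nat) : pt :=
  [ffun t => Ordinal (leq_ltn_trans (geq_minr (v t) (a t)) (ltn_ord (a t)))].
Definition unit_pts : {set pt} := [set unit_pt i | i : 'I_n].

Lemma pt0E t : (pt0 t : nat) = 0.
Proof. by rewrite ffunE. Qed.

Lemma pt_minE (a : pt) v t : (pt_min a v t : nat) = minn (v t) (a t).
Proof. by rewrite ffunE. Qed.

Lemma pt_min_le (a : pt) v : pt_le (pt_min a v) a.
Proof. by apply/forallP => t; rewrite pt_minE geq_minr. Qed.

Lemma deg_pt_min (a : pt) v : (forall t, v t <= a t) -> deg (pt_min a v) = \sum_t v t.
Proof. by move=> le_va; apply: eq_bigr => t _; rewrite pt_minE; apply/minn_idPl. Qed.

Lemma deg_pt0 : deg pt0 = 0.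
Proof. by rewrite /deg big1 // => t _; rewrite pt0E. Qed.

Lemma deg_le (y a : pt) : pt_le y a -> deg y <= deg a.
Proof. by move/forallP => le_ya; apply: leq_sum => t _; apply: le_ya. Qed.

Lemma deg_eq0 (a : pt) : (deg a == 0) = (a == pt0).
Proof.
rewrite /deg sum_nat_eq0; apply/forallP/eqP => [a0|-> t]; last by rewrite pt0E.
by apply/ffunP => t; apply/val_inj; rewrite /= pt0E; apply/eqP/a0.
Qed.

Lemma deg_gt0 (a : pt) : 0 < deg a -> exists i, 0 < a i.
Proof.
rewrite lt0n deg_eq0 => a_neq0; apply/existsP; apply: contraNT a_neq0.
rewrite negb_exists => /forallP a0; apply/eqP/ffunP => t; apply/val_inj.
by rewrite /= pt0E; apply/eqP; rewrite -leqn0 leqNgt a0.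
Qed.

Lemma sum_eq_indicator (i : 'I_n) : \sum_(t < n) ((t == i) : nat) = 1.
Proof. by rewrite (bigD1 i) //= eqxx big1 // => t /negbTE ->. Qed.

Hypothesis d_gt0 : 0 < d.

Lemma unit_ptE i t : (unit_pt i t : nat) = (t == i).
Proof. by rewrite ffunE; case: eqP => _ //=; rewrite inordK. Qed.

Lemma deg_unit_pt i : deg (unit_pt i) = 1.
Proof. by rewrite -(sum_eq_indicator i); apply: eq_bigr => t _; apply: unit_ptE. Qed.

Lemma unit_pt_inj : injective unit_pt.
Proof.
move=> i j /ffunP /(_ i) /(congr1 val); rewrite /= !unit_ptE eqxx.
by case: eqP.
Qed.

Lemma card_unit_pts : #|unit_pts| = n.
Proof. by rewrite card_imset ?card_ord //; apply: unit_pt_inj. Qed.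

Lemma deg_eq1 (a : pt) : deg a = 1 -> exists i, a = unit_pt i.
Proof.
move=> deg1; have [i ai_gt0] : exists i, 0 < a i by apply: deg_gt0; rewrite deg1.
exists i; move: deg1; rewrite /deg (bigD1 i) //=.
set rest := \sum_(_ | _) _ => deg1; have /eqP : rest = 0 by lia.
rewrite sum_nat_eq0 => /forall_inP rest0.
apply/ffunP => t; apply/val_inj; rewrite /= unit_ptE.
by case: eqP => [->|/eqP ne_ti]; [lia | apply/eqP/rest0].
Qed.

Lemma pt_le_unit_pt (y : pt) i : pt_le y (unit_pt i) -> y = pt0 \/ y = unit_pt i.
Proof.
move=> le_yu; have := deg_le le_yu; rewrite deg_unit_pt leq_eqVlt ltnS leqn0 deg_eq0.
case/orP => [/eqP/deg_eq1 [j def_y]|/eqP ->]; last by left.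
right; move/forallP: le_yu => /(_ j); rewrite def_y !unit_ptE eqxx.
by case: eqP => [->|].
Qed.

Lemma card_pos_coords (a : pt) : #|[set i | 0 < a i]| <= deg a.
Proof.
rewrite -sum1dep_card (@leq_trans (\sum_(i | 0 < a i) (a i : nat))) ?leq_sum //.
by rewrite [X in _ <= X](bigID (fun i => 0 < a i)) /= leq_addr.
Qed.

Lemma emb_dimE (L : {set pt}) : (emb_dim L == n) = (unit_pts \subset L).
Proof.
have -> : emb_dim L = #|L :&: unit_pts|.
  congr #|pred_of_set _|; apply/setP => a; rewrite !inE; apply/andP/andP => -[aL a1]; split => //.
    by have [i ->] := deg_eq1 (eqP a1); rewrite imset_f.
  by case/imsetP: a1 => i _ ->; apply/eqP/deg_unit_pt.
rewrite -[X in _ == X]card_unit_pts (subset_leqif_cards (subsetIr L unit_pts)).2.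
exact/eqP/setIidPr.
Qed.

Definition maximal_partition (L : {set pt}) := is_partition L && (emb_dim L == n).
Definition high_pts (L : {set pt}) := [set a in L | 1 < deg a].
Definition support (L : {set pt}) : {set 'I_n} :=
  [set i | [exists a in high_pts L, 0 < a i]].

Lemma maximal_partitionP (L : {set pt}) :
  #|L| = d.+1 -> (forall a y, a \in L -> pt_le y a -> y \in L) -> unit_pts \subset L ->
  maximal_partition L.
Proof.
move=> card_L closed_L units_L; rewrite /maximal_partition emb_dimE units_L andbT.
rewrite /is_partition card_L eqxx; apply/forall_inP => a aL.
by apply/forallP => y; apply/implyP; apply: closed_L.
Qed.

Section MaximalPartition.
Variable L : {set pt}.
Hypothesis L_max : maximal_partition L.

Lemma card_maximal_partition : #|L| = d.+1.
Proof. by case/andP: L_max => /andP [/eqP]. Qed.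

Lemma maximal_partition_closed a y : a \in L -> pt_le y a -> y \in L.
Proof.
case/andP: L_max => /andP [_ /forall_inP closed_L] _ aL.
by move/forallP: (closed_L a aL) => /(_ y) /implyP.
Qed.

Lemma unit_pt_in i : unit_pt i \in L.
Proof.
by case/andP: L_max => _; rewrite emb_dimE => /subsetP; apply; rewrite imset_f.
Qed.

Lemma pt0_in : pt0 \in L.
Proof.
have /card_gt0P [a aL] : 0 < #|L| by rewrite card_maximal_partition.
by apply: maximal_partition_closed aL _; apply/forallP => t; rewrite pt0E.
Qed.

Lemma low_pts : L :\: high_pts L = pt0 |: unit_pts.
Proof.
apply/setP => a; rewrite in_setD in_setU1 !inE; apply/andP/orP.
  case=> /nandP [/negP // | ]; rewrite -leqNgt leq_eqVlt ltnS leqn0 deg_eq0.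
  by case/orP => [/eqP /deg_eq1 [i ->] _| ->]; [right; rewrite imset_f | left].
case=> [/eqP -> | /imsetP [i _ ->]].
  by rewrite deg_pt0 pt0_in.
by rewrite deg_unit_pt unit_pt_in.
Qed.

Lemma card_high_pts : #|high_pts L| + n.+1 = d.+1.
Proof.
have pt0_unit : pt0 \notin unit_pts.
  by apply/imsetP => -[i _ /(congr1 deg)]; rewrite deg_pt0 deg_unit_pt.
rewrite -[X in _ = X]card_maximal_partition -(cardsID (high_pts L) L) low_pts.
rewrite cardsU1 pt0_unit card_unit_pts; congr (#|_| + _).
suff /setIidPr -> : high_pts L \subset L by [].
by apply/subsetP => a; rewrite inE => /andP [].
Qed.

End MaximalPartition.
End Points.

Arguments pt0 {n d}.
Arguments unit_pt {n d} i.
Arguments unit_pts {n d}.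

Section HighPoints.
Variables n e : nat.
Hypothesis e_gt0 : 0 < e.
Local Notation pt := {ffun 'I_n -> 'I_(n + e).+1}.
Let ne_gt0 : 0 < n + e := ltn_addl n e_gt0.

Variable L : {set pt}.
Hypothesis L_max : maximal_partition L.

Lemma card_high_ptsE : #|high_pts L| = e.
Proof. by have := card_high_pts ne_gt0 L_max; lia. Qed.

Lemma maximal_partition_coord_le a i : a \in L -> a i <= e.+1.
Proof.
(* The points min(a, (j + 2) e_i), for j < a_i - 1, are distinct high points of L. *)
move=> aL; pose v (j : 'I_(a i).-1) t := if t == i then j.+2 else 0.
have le_va j t : v j t <= a t.
  by rewrite /v; case: eqP => [->|//]; have := ltn_ord j; lia.
have v_inj : injective (fun j => pt_min a (v j)).
  move=> j1 j2 /ffunP /(_ i) /(congr1 val) /=; rewrite !pt_minE.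
  by rewrite !(minn_idPl (le_va _ i)) /v eqxx => -[] /val_inj.
suff : (a i).-1 <= e by lia.
rewrite -[X in _ <= X]card_high_ptsE -[X in X <= _]card_ord -(card_imset _ v_inj).
apply/subset_leq_card/subsetP => _ /imsetP [j _ ->].
rewrite inE (maximal_partition_closed L_max aL (pt_min_le _ _)) deg_pt_min //.
by rewrite (bigD1 i) //= /v eqxx big1 // => t /negbTE ->.
Qed.

Lemma deg2_below a i : a \in L -> 0 < a i -> 1 < deg a ->
  exists2 b, b \in L & (0 < b i) && (deg b == 2).
Proof.
move=> aL ai_gt0 a_high.
have [j le_ij] : exists j, forall t, (t == i) + (t == j) <= a t.
  have [ai_ge2 | ai_lt2] := leqP 2 (a i).
    by exists i => t; case: eqP => [-> //|].
  have [j /andP [ne_ji aj_gt0]] : exists j, (j != i) && (0 < a j).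
    apply/existsP; apply: contraLR a_high; rewrite negb_exists => /forallP none.
    rewrite /deg (bigD1 i) //= big1 ?addn0 -?leqNgt; first by rewrite -ltnS.
    by move=> t ne_ti; move: (none t); rewrite ne_ti /= lt0n negbK => /eqP.
  exists j => t; case: (eqVneq t i) => [->|ne_ti].
    by rewrite eq_sym (negbTE ne_ji); lia.
  by case: eqP => [->|].
exists (pt_min a (fun t => (t == i) + (t == j))).
  exact: maximal_partition_closed aL (pt_min_le _ _).
rewrite deg_pt_min // big_split /= !sum_eq_indicator pt_minE.
by rewrite (minn_idPl (le_ij i)) eqxx.
Qed.

Lemma support_neq0 : support L != set0.
Proof.
have /card_gt0P [a a_high] : 0 < #|high_pts L| by rewrite card_high_ptsE.
have [i ai_gt0] : exists i, 0 < a i.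
  by apply: deg_gt0; move: a_high; rewrite inE => /andP [_ /ltnW].
by apply/set0Pn; exists i; rewrite inE; apply/existsP; exists a; rewrite a_high.
Qed.

Lemma card_support_le : #|support L| <= 2 * e.
Proof.
pose deg2 := [set b in L | deg b == 2].
pose pos (b : pt) := [set i | 0 < b i].
have sub : support L \subset \bigcup_(b in deg2) pos b.
  apply/subsetP => i; rewrite inE => /existsP [a]; rewrite inE => /andP [/andP [aL a_high] ai].
  have [b bL /andP [bi b2]] := deg2_below aL ai a_high.
  by apply/bigcupP; exists b; rewrite !inE ?bL.
have card_deg2 : #|deg2| <= e.
  rewrite -[X in _ <= X]card_high_ptsE; apply/subset_leq_card/subsetP => b.
  by rewrite !inE => /andP [-> /eqP ->].
apply: leq_trans (subset_leq_card sub) _.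
apply: (@leq_trans (\sum_(b in deg2) #|pos b|)).
  elim/big_ind2: _ => [|p A q B le_Ap le_Bq|//]; first by rewrite cards0.
  exact: leq_trans (leq_card_setU A B).1 (leq_add le_Ap le_Bq).
apply: (@leq_trans (\sum_(b in deg2) 2)); last by rewrite sum_nat_const; lia.
apply: leq_sum => b; rewrite inE => /andP [_ /eqP <-]; exact: card_pos_coords.
Qed.

End HighPoints.

Section Extension.
Variables m n e : nat.
Hypothesis e_gt0 : 0 < e.
Variable sig : 'I_m -> 'I_n.
Hypothesis sig_inj : injective sig.
Local Notation ptm := {ffun 'I_m -> 'I_(m + e).+1}.
Local Notation ptn := {ffun 'I_n -> 'I_(n + e).+1}.
Let me_gt0 : 0 < m + e := ltn_addl m e_gt0.
Let ne_gt0 : 0 < n + e := ltn_addl n e_gt0.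

Lemma leq_dim : m <= n.
Proof. by have := leq_card _ sig_inj; rewrite !card_ord. Qed.

Lemma leq_box : (m + e).+1 <= (n + e).+1.
Proof. by rewrite ltnS leq_add2r leq_dim. Qed.

Definition im_sig : {set 'I_n} := sig @: [set: 'I_m].

Definition ext_pt (b : ptm) : ptn :=
  [ffun i => if [pick j | sig j == i] is Some j then widen_ord leq_box (b j) else ord0].
Definition res_pt (a : ptn) : ptm := [ffun j => inord (a (sig j))].
Definition ext_partition (L : {set ptm}) : {set ptn} :=
  ext_pt @: L :|: [set unit_pt i | i in ~: im_sig].

Lemma im_sigP i : reflect (exists j, i = sig j) (i \in im_sig).
Proof. by apply: (iffP imsetP) => [[j _ ->]|[j ->]]; exists j. Qed.

Lemma card_im_sig : #|im_sig| = m.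
Proof. by rewrite card_imset // cardsT card_ord. Qed.

Lemma ext_ptE (b : ptm) j : (ext_pt b (sig j) : nat) = b j.
Proof.
rewrite ffunE; case: pickP => [j' /eqP /sig_inj -> //|/(_ j)].
by rewrite eqxx.
Qed.

Lemma ext_pt_out (b : ptm) i : i \notin im_sig -> (ext_pt b i : nat) = 0.
Proof.
move=> i_out; rewrite ffunE; case: pickP => [j /eqP def_i|//].
by move: i_out; rewrite -def_i imset_f.
Qed.

Lemma ext_pt_inj : injective ext_pt.
Proof.
move=> b b' /ffunP eq_bb'; apply/ffunP => j; apply/val_inj.
by move: (eq_bb' (sig j)) => /(congr1 val) /=; rewrite !ext_ptE.
Qed.

Lemma pt_le_ext (b b' : ptm) : pt_le (ext_pt b) (ext_pt b') = pt_le b b'.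
Proof.
apply/forallP/forallP => le_bb' j; first by move: (le_bb' (sig j)); rewrite !ext_ptE.
have [/im_sigP [j' ->]|j_out] := boolP (j \in im_sig); first by rewrite !ext_ptE.
by rewrite !ext_pt_out.
Qed.

Lemma deg_ext_pt (b : ptm) : deg (ext_pt b) = deg b.
Proof.
rewrite /deg (bigID (mem im_sig)) /= [X in _ + X]big1 ?addn0; last first.
  by move=> i i_out; rewrite ext_pt_out.
rewrite big_imset /=; last by move=> x y _ _; apply: sig_inj.
by apply: eq_big => [j|j _]; rewrite ?inE // ext_ptE.
Qed.

Lemma ext_unit_pt j : ext_pt (unit_pt j) = unit_pt (sig j).
Proof.
apply/ffunP => i; apply/val_inj => /=.
have [/im_sigP [j' ->]|i_out] := boolP (i \in im_sig).
  rewrite ext_ptE !unit_ptE //.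
  by congr nat_of_bool; apply/eqP/eqP => [->|/sig_inj].
rewrite ext_pt_out // unit_ptE //; case: eqP => // def_i.
by move: i_out; rewrite def_i imset_f.
Qed.

Lemma ext_pt0 : ext_pt pt0 = pt0.
Proof.
apply/ffunP => i; apply/val_inj => /=; rewrite pt0E.
have [/im_sigP [j ->]|i_out] := boolP (i \in im_sig); last by rewrite ext_pt_out.
by rewrite ext_ptE pt0E.
Qed.

Lemma res_ptK (a : ptn) : (forall i, i \notin im_sig -> (a i : nat) = 0) ->
  (forall j, a (sig j) < (m + e).+1) -> ext_pt (res_pt a) = a.
Proof.
move=> a_out a_bound; apply/ffunP => i; apply/val_inj => /=.
have [/im_sigP [j ->]|i_out] := boolP (i \in im_sig); last by rewrite ext_pt_out // a_out.
by rewrite ext_ptE ffunE inordK.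
Qed.

Lemma ext_pt_neq_unit_pt b i : i \notin im_sig -> ext_pt b != unit_pt i.
Proof.
move=> i_out; apply/eqP => /ffunP /(_ i) /(congr1 val) /=.
by rewrite ext_pt_out // unit_ptE // eqxx.
Qed.

Lemma card_ext_partition L : #|ext_partition L| = #|L| + (n - m).
Proof.
rewrite /ext_partition cardsU.
have -> : ext_pt @: L :&: [set unit_pt i | i in ~: im_sig] = set0.
  apply/setP => a; rewrite !inE; apply/negbTE/andP => -[/imsetP [b _ ->]].
  by case/imsetP => i; rewrite inE => i_out /eqP; rewrite (negbTE (ext_pt_neq_unit_pt _ i_out)).
rewrite cards0 subn0 card_imset; last exact: ext_pt_inj.
rewrite card_imset; last exact: unit_pt_inj ne_gt0.
have := cardsC im_sig; rewrite card_im_sig card_ord => /(congr1 (subn^~ m)).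
by rewrite addKn => ->.
Qed.

Lemma ext_partition_inj : injective ext_partition.
Proof.
suff preim L : [set b | ext_pt b \in ext_partition L] = L.
  by move=> L L' eq_LL'; rewrite -(preim L) -(preim L') eq_LL'.
apply/setP => b; rewrite !inE mem_imset; last exact: ext_pt_inj.
case: (b \in L) => //=; apply/negbTE/imsetP => -[i]; rewrite inE => i_out /eqP.
by rewrite (negbTE (ext_pt_neq_unit_pt _ i_out)).
Qed.

Lemma pt_le_ext_pt (y : ptn) b : pt_le y (ext_pt b) -> exists2 c, y = ext_pt c & pt_le c b.
Proof.
move=> /forallP le_yb.
have y_out i : i \notin im_sig -> (y i : nat) = 0.
  by move=> i_out; move: (le_yb i); rewrite ext_pt_out //; lia.
have y_bound j : y (sig j) < (m + e).+1.
  by move: (le_yb (sig j)); rewrite ext_ptE => /leq_ltn_trans; apply.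
exists (res_pt y); first by rewrite (res_ptK y_out y_bound).
by rewrite -pt_le_ext (res_ptK y_out y_bound); apply/forallP.
Qed.

Lemma high_pts_ext L : high_pts (ext_partition L) = ext_pt @: high_pts L.
Proof.
apply/setP => a; rewrite inE in_setU; apply/andP/imsetP.
  case=> /orP [/imsetP [b bL ->] | /imsetP [i _ ->]] a_high.
    by exists b; rewrite // inE bL -deg_ext_pt.
  by move: a_high; rewrite deg_unit_pt.
case=> b; rewrite inE => /andP [bL b_high] ->.
by rewrite imset_f // deg_ext_pt.
Qed.

Lemma support_ext L : support (ext_partition L) = sig @: support L.
Proof.
apply/setP => i; rewrite inE high_pts_ext; apply/existsP/imsetP.
  case=> _ /andP [/imsetP [b b_high ->] bi].
  have [/imsetP [j _ def_i]|i_out] := boolP (i \in im_sig); last first.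
    by move: bi; rewrite ext_pt_out.
  exists j => //; rewrite inE; apply/existsP; exists b.
  by rewrite b_high -ext_ptE -def_i.
case=> j; rewrite inE => /existsP [b /andP [b_high bj]] ->.
by exists (ext_pt b); rewrite imset_f //= ext_ptE.
Qed.

Lemma ext_partition_max L : maximal_partition L -> maximal_partition (ext_partition L).
Proof.
move=> L_max.
apply: (maximal_partitionP ne_gt0).
- by rewrite card_ext_partition (card_maximal_partition L_max); have := leq_dim; lia.
- move=> a y; rewrite inE => /orP [/imsetP [b bL ->] | /imsetP [i i_out ->]] le_ya.
    have [c -> le_cb] := pt_le_ext_pt le_ya.
    by rewrite inE imset_f ?(maximal_partition_closed L_max bL).
  case/(pt_le_unit_pt ne_gt0): le_ya => ->; last by rewrite inE imset_f ?orbT.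
  by rewrite inE -ext_pt0 imset_f ?(pt0_in L_max).
- apply/subsetP => _ /imsetP [i _ ->]; rewrite inE.
  have [/imsetP [j _ ->]|i_out] := boolP (i \in im_sig); last by rewrite imset_f ?orbT ?inE.
  by rewrite -ext_unit_pt imset_f // unit_pt_in.
Qed.

Section Restriction.
Variable lam : {set ptn}.
Hypothesis lam_max : maximal_partition lam.
Hypothesis lam_support : support lam = im_sig.

Lemma maximal_partition_pt_cases a : a \in lam ->
  a \in ext_pt @: [set b | ext_pt b \in lam] \/ exists2 i, i \notin im_sig & a = unit_pt i.
Proof.
move=> a_lam.
have [/existsP [i /andP [i_out ai_gt0]] | ] := boolP [exists i, (i \notin im_sig) && (0 < a i)].
  right; exists i => //.
  have a_low : ~~ (1 < deg a).
    apply: contra i_out => a_high; rewrite -lam_support inE; apply/existsP.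
    by exists a; rewrite inE a_lam a_high.
  have deg_a : deg a = 1.
    have : 0 < deg a by apply: leq_trans ai_gt0 _; rewrite /deg (bigD1 i) //= leq_addr.
    by move: a_low; rewrite -leqNgt; lia.
  have [i' def_a] := deg_eq1 ne_gt0 deg_a.
  by move: ai_gt0; rewrite def_a unit_ptE //; case: eqP => // ->.
rewrite negb_exists => /forallP a_in; left.
have a_out i : i \notin im_sig -> (a i : nat) = 0.
  by move=> i_out; move: (a_in i); rewrite i_out /= lt0n negbK => /eqP.
have m_gt0 : 0 < m.
  by rewrite -card_im_sig -lam_support card_gt0 (support_neq0 e_gt0 lam_max).
have a_bound j : a (sig j) < (m + e).+1.
  by have := maximal_partition_coord_le e_gt0 lam_max (sig j) a_lam; lia.
by rewrite -(res_ptK a_out a_bound) imset_f // inE res_ptK.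
Qed.

Lemma ext_partition_onto :
  exists2 L, maximal_partition L && (support L == setT) & ext_partition L = lam.
Proof.
pose L := [set b | ext_pt b \in lam].
have ext_L : ext_partition L = lam.
  apply/setP => a; apply/idP/idP.
    rewrite inE => /orP [/imsetP [b] | /imsetP [i _ ->]]; first by rewrite inE => ? ->.
    exact: unit_pt_in.
  case/maximal_partition_pt_cases => [a_ext | [i i_out ->]]; rewrite inE.
    by rewrite a_ext.
  by rewrite imset_f ?orbT ?inE.
have L_max : maximal_partition L.
  apply: (maximal_partitionP me_gt0).
  - have := card_ext_partition L; rewrite ext_L (card_maximal_partition lam_max).
    by have := leq_dim; lia.
  - move=> b y; rewrite !inE => b_lam le_yb.
    by rewrite (maximal_partition_closed lam_max b_lam) ?pt_le_ext.
  - by apply/subsetP => _ /imsetP [j _ ->]; rewrite inE ext_unit_pt unit_pt_in.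
exists L => //; rewrite L_max /=; apply/eqP/(imset_inj sig_inj).
by rewrite -support_ext ext_L.
Qed.

End Restriction.

Lemma card_support_im_sig :
  #|[set lam : {set ptn} | maximal_partition lam && (support lam == im_sig)]| =
  #|[set L : {set ptm} | maximal_partition L && (support L == setT)]|.
Proof.
rewrite -(card_imset _ ext_partition_inj); congr #|pred_of_set _|.
apply/setP => lam; rewrite !inE; apply/andP/imsetP.
  move=> [lam_max /eqP lam_support].
  by have [L L_full <-] := ext_partition_onto lam_max lam_support; exists L; rewrite ?inE.
move=> [L]; rewrite inE => /andP [L_max /eqP L_full] ->.
by rewrite ext_partition_max // support_ext L_full.
Qed.

End Extension.

Section Counting.
Variable e : nat.
Hypothesis e_gt0 : 0 < e.

Definition count_full_support (m : nat) : nat :=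
  #|[set L : {set {ffun 'I_m -> 'I_(m + e).+1}} |
      maximal_partition L && (support L == setT)]|.

Definition count_support (n : nat) (U : {set 'I_n}) : nat :=
  #|[set lam : {set {ffun 'I_n -> 'I_(n + e).+1}} |
      maximal_partition lam && (support lam == U)]|.

Lemma count_full_support0 : count_full_support 0 = 0.
Proof.
apply/eqP; rewrite cards_eq0; apply/eqP/setP => L; rewrite !inE.
apply/negbTE/andP => -[L_max _]; move: (support_neq0 e_gt0 L_max).
have -> : support L = set0 by apply/setP => -[].
by rewrite eqxx.
Qed.

Lemma count_full_support_gt m : 2 * e < m -> count_full_support m = 0.
Proof.
move=> m_gt; apply/eqP; rewrite cards_eq0; apply/eqP/setP => L; rewrite !inE.
apply/negbTE/andP => -[L_max /eqP L_full]; move: (card_support_le e_gt0 L_max).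
by rewrite L_full cardsT card_ord leqNgt m_gt.
Qed.

Lemma count_supportE n (U : {set 'I_n}) : count_support U = count_full_support #|U|.
Proof.
have im_enum : enum_val (A := mem U) @: setT = U.
  apply/setP => i; apply/imsetP/idP => [[j _ ->]|Ui]; first exact: enum_valP.
  by exists (enum_rank_in Ui i); rewrite ?enum_rankK_in.
rewrite /count_support -{1}im_enum; exact: (card_support_im_sig e_gt0 enum_val_inj).
Qed.

Lemma ycount_sum_support n :
  ycount n (n + e).+1 = \sum_(U : {set 'I_n}) count_support U.
Proof.
rewrite /ycount -sum1dep_card.
rewrite (eq_bigr (fun lam => \sum_(U : {set 'I_n}) (support lam == U : nat))); last first.
  move=> lam _; rewrite (bigD1 (support lam)) //= eqxx big1 // => U.
  by rewrite eq_sym => /negbTE ->.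
rewrite exchange_big /=; apply: eq_bigr => U _.
rewrite /count_support -sum1dep_card big_mkcond [RHS]big_mkcond /=.
by apply: eq_bigr => lam _; rewrite /maximal_partition; case: (_ && _); case: (support lam == U).
Qed.

Lemma ycount_binomial n :
  ycount n (n + e).+1 = \sum_(k < (2 * e).+1) 'C(n, k) * count_full_support k.
Proof.
have pick x : count_full_support x =
    \sum_(k < (2 * e).+1) (x == k) * count_full_support k.
  have [x_le | x_gt] := ltnP x (2 * e).+1.
    rewrite (bigD1 (Ordinal x_le)) //= eqxx mul1n big1 ?addn0 // => k.
    by rewrite -val_eqE /= eq_sym => /negbTE ->.
  rewrite count_full_support_gt // big1 // => k _.
  by rewrite gtn_eqF // (leq_trans (ltn_ord k)).
rewrite ycount_sum_support.
under eq_bigr => U _ do rewrite count_supportE pick.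
rewrite exchange_big; apply: eq_bigr => k _ /=.
rewrite -big_distrl /=; congr (_ * _).
rewrite -[X in 'C(X, _)](card_ord n) -card_draws -sum1dep_card [RHS]big_mkcond /=.
by apply: eq_bigr => U _; case: (#|U| == k).
Qed.

Lemma ycount_dim0 : ycount 0 (0 + e).+1 = 0.
Proof.
by rewrite ycount_binomial big_ord_recl count_full_support0 muln0 big1.
Qed.

End Counting.

Import GRing.Theory.
Local Open Scope ring_scope.

Lemma big_ord_trunc (V : nmodType) n N (G : nat -> V) :
  (n <= N)%N -> (forall k, (n <= k)%N -> G k = 0) -> \sum_(k < N) G k = \sum_(k < n) G k.
Proof.
move=> le_nN G0; rewrite (big_ord_widen N G le_nN) [RHS]big_mkcond /=.
by apply: eq_bigr => k _; case: ltnP => // /G0.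
Qed.

Section FiniteDifferences.
Variable R : comNzRingType.

Definition fdiff (r : nat) (f : nat -> R) (x : nat) : R :=
  \sum_(i < r.+1) (-1) ^+ i * ('C(r, i))%:R * f (x + r - i)%N.

Lemma fdiffS r f x : fdiff r.+1 f x = fdiff r f x.+1 - fdiff r f x.
Proof.
rewrite /fdiff big_ord_recl /= bin0 mulr1 expr0 mul1r subn0.
under eq_bigr => i _ do rewrite /bump /= add1n binS natrD exprS addnS subSS.
under eq_bigr => i _ do rewrite mulN1r !mulNr mulrDr mulrDl opprD.
rewrite big_split /= !sumrN big_ord_recr /= bin_small // mulr0 mul0r addr0.
rewrite [X in _ = X - _]big_ord_recl /= bin0 expr0 mul1r subn0 addSn -addnS.
under [X in _ = _ + X - _]eq_bigr => i _ do rewrite /bump /= add1n addnS subSS exprS mulN1r !mulNr.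
by rewrite sumrN; ring.
Qed.

Lemma fdiff_binomial r j x :
  fdiff r (fun k => ('C(k, j))%:R) x = if (r <= j)%N then ('C(x, j - r))%:R else 0.
Proof.
elim: r j x => [|r IHr] j x; first by rewrite /fdiff big_ord1 expr0 bin0 !mul1r addn0 !subn0.
rewrite fdiffS !IHr; case: (ltngtP r j) => [lt_rj|_|<-]; last by rewrite subnn !bin0 subrr.
  rewrite (_ : (j - r = (j - r.+1).+1)%N); last by lia.
  by rewrite binS natrD addrC addKr.
by rewrite subrr.
Qed.

Lemma fdiff_binomial_sum_eq0 r D (c : nat -> R) (f : nat -> R) x :
  (forall k, f k = \sum_(j < D) c j * ('C(k, j))%:R) -> (D <= r)%N -> fdiff r f x = 0.
Proof.
move=> def_f le_Dr.
transitivity (\sum_(j < D) c j * fdiff r (fun k => ('C(k, j))%:R) x).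
  rewrite /fdiff; under eq_bigr => i _ do rewrite def_f mulr_sumr.
  rewrite exchange_big /=; apply: eq_bigr => j _; rewrite mulr_sumr.
  by apply: eq_bigr => i _; rewrite mulrCA.
rewrite big1 // => j _; rewrite fdiff_binomial leqNgt (leq_trans (ltn_ord j) le_Dr).
by rewrite mulr0.
Qed.

Lemma coef_1subX_exp r i : ((1 - 'X) ^+ r : {poly R})`_i = (-1) ^+ i * ('C(r, i))%:R.
Proof.
rewrite exprBn coef_sum.
under eq_bigr => j _ do rewrite expr1n mulr1 coefMn -polyCN -polyC_exp coefCM coefXn.
have [lt_ir | le_ri] := ltnP i r.+1.
  rewrite (bigD1 (Ordinal lt_ir)) //= eqxx mulr1 big1 ?addr0 ?mulr_natr // => j.
  by rewrite -val_eqE /= eq_sym => /negbTE ->; rewrite mulr0 mul0rn.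
rewrite bin_small // mulr0 big1 // => j _.
by rewrite gtn_eqF ?mulr0 ?mul0rn // (leq_trans (ltn_ord j)).
Qed.

End FiniteDifferences.

Lemma Ycoef_ycount e k : Ycoef e k = (ycount k.+1 (k.+1 + e).+1)%:Z.
Proof. by rewrite /Ycoef (_ : (k + 2 + e = (k.+1 + e).+1)%N) //; lia. Qed.

Lemma coef_1subX_Y_gamma e N :
  \sum_(i < N.+1) ((1 - 'X) ^+ (2 * e + 1) : {poly int})`_i * Ycoef e (N - i) = gamma e N.
Proof.
rewrite /gamma (reindex_inj rev_ord_inj) /=; apply: eq_bigr => j _.
have le_jN : (j <= N)%N by rewrite -ltnS ltn_ord.
rewrite coef_1subX_exp subSS (subKn le_jN) Ycoef_ycount.
rewrite (_ : (j.+1 + e).+1 = (j + e + 2)%N); last by lia.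
by rewrite -signr_odd (oddB le_jN) -[in RHS]signr_odd oddD !natz.
Qed.

Lemma coef_1subX_Y_eq0 e N : (0 < e)%N -> (2 * e <= N)%N ->
  \sum_(i < N.+1) ((1 - 'X) ^+ (2 * e + 1) : {poly int})`_i * Ycoef e (N - i) = 0.
Proof.
move=> e_gt0 le_N; pose F k : int := (ycount k (k + e).+1)%:Z.
pose G (i : nat) := (-1) ^+ i * ('C(2 * e + 1, i))%:R * F (N.+1 - i)%N.
rewrite (eq_bigr (fun i : 'I_N.+1 => G i)); last first.
  by move=> i _; rewrite coef_1subX_exp Ycoef_ycount /G /F subSn // -ltnS.
(* Pad to the (2e+1)-st difference of k |-> y^k_{k+e+1}: the extra term at i = N+1 is
   y^0_{e+1} = 0, and the terms with i > 2e+1 vanish. *)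
have -> : \sum_(i < N.+1) G i = \sum_(i < N.+2) G i.
  by rewrite [RHS]big_ord_recr /= /G subnn /F ycount_dim0 // mulr0 addr0.
rewrite (@big_ord_trunc _ (2 * e + 1).+1); first last.
- by move=> k lt_k; rewrite /G bin_small // mulr0n mulr0 mul0r.
- by rewrite !ltnS addn1.
transitivity (fdiff (2 * e + 1) F (N - 2 * e)).
  by apply: eq_bigr => i _; rewrite /G (_ : (N - 2 * e + (2 * e + 1) - i = N.+1 - i)%N) //; lia.
apply: (@fdiff_binomial_sum_eq0 _ _ (2 * e).+1 (fun j => (count_full_support e j)%:Z)); last first.
  by rewrite addn1.
move=> k; rewrite /F ycount_binomial // -natz natr_sum; apply: eq_bigr => j _.
by rewrite natrM mulrC natz.
Qed.

Theorem theorem3p4 (e : nat) (he : (0 < e)%N) :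
  forall N : nat,
    \sum_(i < N.+1) ((1 - 'X) ^+ (2 * e + 1) : {poly int})`_i * Ycoef e (N - i)
    = (ye e)`_N.
Proof.
move=> N; rewrite coef_poly; case: ltnP => [_|le_N].
  exact: coef_1subX_Y_gamma.
exact: coef_1subX_Y_eq0.
Qed.
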